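(* Let $u,v\in\dot H^{-1}$ and $S>1/2$. Then for every $t\in\mathbb{R}$, with $B_2$ as defined in the context, $$\|B_2(u,v)\|_{\dot H^{-S}}\le c(S)\|u\|_{\dot H^{-1}}\|v\|_{\dot H^{-1}},\qquad c(S)=\Big(\sum_{k\in\mathbb{Z}_0}|k|^{-2S}\Big)^{1/2}.$$
   Context: Write $\mathbb{Z}_0=\mathbb{Z}\setminus\{0\}$. For $s\in\mathbb{R}$, $\dot H^s$ denotes the Hilbert space of complex sequences $v=(v_k)_{k\in\mathbb{Z}_0}$ with $\|v\|_{\dot H^s}^2=\sum_{k\in\mathbb{Z}_0}|k|^{2s}|v_k|^2<\infty$. For $t\in\mathbb{R}$, $$B_2(u,v)_k=\sum_{k_1+k_2=k,\ k_1,k_2\in\mathbb{Z}_0}\frac{e^{3ikk_1k_2t}u_{k_1}v_{k_2}}{k_1k_2},\qquad k\in\mathbb{Z}_0.$$ *)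

From Stdlib Require Import Reals ZArith.
From Coquelicot Require Import Coquelicot.
Open Scope R_scope.

(* Sequences indexed by Z_0 = Z \ {0} are represented as functions Z -> C;
   the value at index 0 is never used. *)
Definition seqZ0 := Z -> C.

(* Sum over Z_0 of a real family f, pairing k and -k:
   sum_{n>=0} (f (n+1) + f (-(n+1))). *)
Definition pair_term (f : Z -> R) (n : nat) : R :=
  f (Z.of_nat (S n)) + f (- Z.of_nat (S n))%Z.

Definition Hdot_term (s : R) (v : seqZ0) (k : Z) : R :=
  Rpower (IZR (Z.abs k)) (2 * s) * (Cmod (v k))^2.

Definition in_Hdot (s : R) (v : seqZ0) : Prop :=
  ex_series (pair_term (Hdot_term s v)).

Definition Hdot_norm (s : R) (v : seqZ0) : R :=
  sqrt (Series (pair_term (Hdot_term s v))).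

Definition CSeries (a : nat -> C) : C :=
  (Series (fun n => fst (a n)), Series (fun n => snd (a n))).

Definition cexpi (theta : R) : C := (cos theta, sin theta).

(* Summand of B_2(u,v)_k indexed by k1 (with k2 = k - k1); it is 0 when
   k1 = 0 or k2 = 0, i.e. these indices are excluded from the sum. *)
Definition B2_term (t : R) (u v : seqZ0) (k k1 : Z) : C :=
  let k2 := (k - k1)%Z in
  if Z.eq_dec k1 0 then RtoC 0 else
  if Z.eq_dec k2 0 then RtoC 0 else
  Cmult (Cmult (cexpi (3 * IZR k * IZR k1 * IZR k2 * t)) (Cmult (u k1) (v k2)))
        (RtoC (/ (IZR k1 * IZR k2))).

Definition B2_abs_summable (t : R) (u v : seqZ0) (k : Z) : Prop :=
  ex_series (pair_term (fun k1 => Cmod (B2_term t u v k k1))).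

(* B_2(u,v)_k = sum_{k1+k2=k, k1,k2 in Z_0} e^{3ikk1k2t} u_{k1} v_{k2}/(k1 k2) *)
Definition B2 (t : R) (u v : seqZ0) : seqZ0 :=
  fun k => Cplus (B2_term t u v k 0)
     (CSeries (fun n => Cplus (B2_term t u v k (Z.of_nat (S n)))
                              (B2_term t u v k (- Z.of_nat (S n))%Z))).

Definition cS (S : R) : R :=
  sqrt (Series (pair_term (fun k => Rpower (IZR (Z.abs k)) (- (2 * S))))).

(* With a_k = |u_k| / |k| and b_k = |v_k| / |k|, which are square summable with
   l^2 norms ||u||_{H^-1} and ||v||_{H^-1}, the phase in B_2 has modulus one, so
   |B_2(u,v)_k| <= sum_{k1} a_{k1} b_{k-k1} <= ||u||_{H^-1} ||v||_{H^-1} by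
   Cauchy-Schwarz (obtained from 2ab <= l a^2 + b^2 / l, optimised over l > 0).
   Hence |k|^{-2S} |B_2(u,v)_k|^2 <= |k|^{-2S} ||u||^2 ||v||^2, and the series
   sum_k |k|^{-2S} converges for 2S > 1 by Cauchy condensation. *)

From Stdlib Require Import Reals ZArith Lra Lia.
From Coquelicot Require Import Coquelicot.
Open Scope R_scope.

Lemma ex_series_Rmult_l (c : R) (a : nat -> R) :
  ex_series a -> ex_series (fun n => c * a n).
Proof. exact (@ex_series_scal_l _ R_NormedModule c a). Qed.

Lemma ex_series_nonneg_le (a b : nat -> R) :
  (forall n, 0 <= a n <= b n) -> ex_series b -> ex_series a.
Proof.
  intro Hab. apply (@ex_series_le _ R_CompleteNormedModule).
  intro n. unfold norm; simpl. unfold abs; simpl. rewrite Rabs_pos_eq; apply Hab.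
Qed.

Lemma sum_f_R0_le_Series (a : nat -> R) (N : nat) :
  (forall n, 0 <= a n) -> ex_series a -> sum_f_R0 a N <= Series a.
Proof.
  intros Ha Hex. apply sum_incr; [apply is_series_Reals, Series_correct, Hex | exact Ha].
Qed.

Lemma Series_nonneg (a : nat -> R) :
  (forall n, 0 <= a n) -> ex_series a -> 0 <= Series a.
Proof.
  intros Ha Hex. apply Rle_trans with (a 0%nat); [apply Ha | exact (sum_f_R0_le_Series a 0 Ha Hex)].
Qed.

Lemma ex_series_bounded_partial (a : nat -> R) (M : R) :
  (forall n, 0 <= a n) -> (forall N, sum_f_R0 a N <= M) ->
  ex_series a /\ Series a <= M.
Proof.
  intros Ha HM.
  destruct (growing_cv (sum_f_R0 a)) as [l Hl].
  - intro n. simpl. specialize (Ha (S n)). lra.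
  - exists M. intros x [n ->]. apply HM.
  - assert (Hs : is_series a l) by (apply is_series_Reals; exact Hl).
    split; [exists l; exact Hs |].
    rewrite (is_series_unique _ _ Hs).
    apply is_lim_seq_Reals in Hl.
    exact (is_lim_seq_le _ _ _ _ HM Hl (is_lim_seq_const M)).
Qed.

Lemma Rabs_inner_le_Cmod (z w : C) :
  Rabs (fst z * fst w + snd z * snd w) <= Cmod z * Cmod w.
Proof.
  destruct z as [x y], w as [p q]. unfold Cmod; simpl.
  rewrite !Rmult_1_r. unfold Rabs.
  destruct (Rcase_abs _).
  - pose proof (sqrt_cauchy (- x) (- y) p q). unfold Rsqr in H.
    rewrite !Rmult_opp_opp in H. lra.
  - pose proof (sqrt_cauchy x y p q). unfold Rsqr in H. lra.
Qed.

Lemma Cmod_CSeries_le (w : nat -> C) (m : nat -> R) :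
  (forall n, Cmod (w n) <= m n) -> ex_series m -> Cmod (CSeries w) <= Series m.
Proof.
  intros Hw Hm.
  assert (Hm0 : forall n, 0 <= m n) by (intro n; eapply Rle_trans; [apply Cmod_ge_0 | apply Hw]).
  assert (Hfst : ex_series (fun n => fst (w n))).
  { apply ex_series_Rabs, (ex_series_nonneg_le _ m); [intro n; split; [apply Rabs_pos |] | exact Hm].
    eapply Rle_trans; [eapply Rle_trans; [apply Rmax_l | apply Rmax_Cmod] | apply Hw]. }
  assert (Hsnd : ex_series (fun n => snd (w n))).
  { apply ex_series_Rabs, (ex_series_nonneg_le _ m); [intro n; split; [apply Rabs_pos |] | exact Hm].
    eapply Rle_trans; [eapply Rle_trans; [apply Rmax_r | apply Rmax_Cmod] | apply Hw]. }
  set (z := CSeries w).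
  assert (Hinner : forall n, Rabs (fst z * fst (w n) + snd z * snd (w n)) <= Cmod z * m n).
  { intro n. eapply Rle_trans; [apply Rabs_inner_le_Cmod |].
    apply Rmult_le_compat_l; [apply Cmod_ge_0 | apply Hw]. }
  assert (Hsq : Cmod z * Cmod z = Series (fun n => fst z * fst (w n) + snd z * snd (w n))).
  { rewrite Series_plus by (apply ex_series_Rmult_l; assumption).
    rewrite !Series_scal_l. unfold Cmod. rewrite sqrt_sqrt by nra.
    change (Series (fun n => fst (w n))) with (fst z).
    change (Series (fun n => snd (w n))) with (snd z). ring. }
  assert (Hle : Cmod z * Cmod z <= Cmod z * Series m).
  { rewrite Hsq, <- Series_scal_l. eapply Rle_trans; [apply Rle_abs |].
    eapply Rle_trans; [apply Series_Rabs |].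
    - apply (ex_series_nonneg_le _ _ (fun n => conj (Rabs_pos _) (Hinner n))), ex_series_Rmult_l, Hm.
    - apply Series_le; [intro n; split; [apply Rabs_pos | apply Hinner] | apply ex_series_Rmult_l, Hm]. }
  pose proof (Cmod_ge_0 z). pose proof (Series_nonneg m Hm0 Hm). nra.
Qed.

Lemma le_sqrt_mult_of_AMGM (X A B : R) : 0 <= A -> 0 <= B ->
  (forall l, 0 < l -> 2 * X <= l * A + B / l) -> X <= sqrt A * sqrt B.
Proof.
  intros HA HB H.
  destruct (Rle_or_lt X 0) as [HX | HX].
  { apply Rle_trans with 0; [exact HX | apply Rmult_le_pos; apply sqrt_pos]. }
  rewrite <- sqrt_mult_alt, <- (sqrt_square X) by lra. apply sqrt_le_1_alt.
  destruct (Req_dec A 0) as [HA0 | HA0].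
  - exfalso. subst A.
    assert (Hl : 0 < (B + 1) / X) by (apply Rdiv_lt_0_compat; lra).
    specialize (H _ Hl).
    replace ((B + 1) / X * 0 + B / ((B + 1) / X)) with (X - X / (B + 1)) in H by (field; lra).
    assert (0 < X / (B + 1)) by (apply Rdiv_lt_0_compat; lra). lra.
  - assert (Hl : 0 < X / A) by (apply Rdiv_lt_0_compat; lra).
    specialize (H _ Hl).
    replace (X / A * A) with X in H by (field; lra).
    replace (B / (X / A)) with (A * B / X) in H by (field; lra).
    assert (Hq : X * X <= A * B / X * X) by (apply Rmult_le_compat_r; lra).
    replace (A * B / X * X) with (A * B) in Hq by (field; lra). exact Hq.
Qed.

Fixpoint sumZ (f : Z -> R) (lo : Z) (n : nat) : R :=
  match n with O => 0 | S n' => f lo + sumZ f (lo + 1)%Z n' end.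

Lemma sumZ_cons (f : Z -> R) (n : nat) (lo : Z) :
  sumZ f lo (S n) = f lo + sumZ f (lo + 1)%Z n.
Proof. reflexivity. Qed.

Lemma sumZ_split (f : Z -> R) (n m : nat) (lo : Z) :
  sumZ f lo (n + m) = sumZ f lo n + sumZ f (lo + Z.of_nat n)%Z m.
Proof.
  revert lo; induction n as [|n IH]; intro lo; simpl.
  - rewrite Z.add_0_r; ring.
  - rewrite IH. replace (lo + 1 + Z.of_nat n)%Z with (lo + Z.pos (Pos.of_succ_nat n))%Z by lia.
    ring.
Qed.

Lemma sumZ_snoc (f : Z -> R) (n : nat) (lo : Z) :
  sumZ f lo (S n) = sumZ f lo n + f (lo + Z.of_nat n)%Z.
Proof. rewrite <- Nat.add_1_r, sumZ_split. simpl. ring. Qed.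

Lemma sumZ_le (f g : Z -> R) (n : nat) (lo : Z) :
  (forall i, f i <= g i) -> sumZ f lo n <= sumZ g lo n.
Proof.
  intro Hfg; revert lo; induction n as [|n IH]; intro lo; simpl; [lra |].
  specialize (IH (lo + 1)%Z). specialize (Hfg lo). lra.
Qed.

Lemma sumZ_nonneg (f : Z -> R) (n : nat) (lo : Z) :
  (forall i, 0 <= f i) -> 0 <= sumZ f lo n.
Proof.
  intro Hf. replace 0 with (sumZ (fun _ => 0) lo n) by (revert lo; induction n; simpl; intros; [| rewrite IHn]; ring).
  apply sumZ_le, Hf.
Qed.

Lemma sumZ_linear (c d : R) (f g : Z -> R) (n : nat) (lo : Z) :
  sumZ (fun i => c * f i + d * g i) lo n = c * sumZ f lo n + d * sumZ g lo n.
Proof. revert lo; induction n as [|n IH]; intro lo; simpl; [| rewrite IH]; ring. Qed.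

Lemma sumZ_subrange (f : Z -> R) (lo lo' : Z) (n n' : nat) : (forall i, 0 <= f i) ->
  (lo' <= lo)%Z -> (lo + Z.of_nat n <= lo' + Z.of_nat n')%Z ->
  sumZ f lo n <= sumZ f lo' n'.
Proof.
  intros Hf Hlo Hhi.
  set (d := Z.to_nat (lo - lo')). set (e := Z.to_nat (lo' + Z.of_nat n' - lo - Z.of_nat n)).
  replace n' with (d + (n + e))%nat by lia.
  rewrite !sumZ_split. replace (lo' + Z.of_nat d)%Z with lo by lia.
  pose proof (sumZ_nonneg f d lo' Hf). pose proof (sumZ_nonneg f e (lo + Z.of_nat n)%Z Hf). lra.
Qed.

Lemma sumZ_reflect (f : Z -> R) (k lo : Z) (n : nat) :
  sumZ (fun j => f (k - j)%Z) lo n = sumZ f (k - lo - Z.of_nat n + 1)%Z n.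
Proof.
  revert lo; induction n as [|n IH]; intro lo; [reflexivity |].
  rewrite sumZ_cons, IH, sumZ_snoc.
  replace (k - (lo + 1) - Z.of_nat n + 1)%Z with (k - lo - Z.of_nat (S n) + 1)%Z by lia.
  replace (k - lo - Z.of_nat (S n) + 1 + Z.of_nat n)%Z with (k - lo)%Z by lia. ring.
Qed.

Lemma sum_f_R0_sumZ (f : Z -> R) (N : nat) :
  sum_f_R0 (fun n => f (Z.of_nat (S n))) N = sumZ f 1 (S N).
Proof.
  induction N as [|N IH]; [simpl; ring |].
  rewrite sumZ_snoc, <- IH. simpl sum_f_R0. f_equal. f_equal. lia.
Qed.

Lemma sum_f_R0_pair_term (f : Z -> R) (N : nat) :
  sum_f_R0 (pair_term f) N + f 0%Z = sumZ f (- (Z.of_nat N + 1))%Z (2 * N + 3).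
Proof.
  induction N as [|N IH].
  - unfold pair_term. simpl. ring.
  - simpl sum_f_R0.
    replace (2 * S N + 3)%nat with (S (S (2 * N + 3))) by lia.
    rewrite sumZ_snoc, sumZ_cons.
    replace (- (Z.of_nat (S N) + 1) + 1)%Z with (- (Z.of_nat N + 1))%Z by lia.
    rewrite <- IH. unfold pair_term.
    replace (- (Z.of_nat (S N) + 1) + Z.of_nat (S (2 * N + 3)))%Z with (Z.of_nat (S (S N))) by lia.
    replace (- (Z.of_nat (S N) + 1))%Z with (- Z.of_nat (S (S N)))%Z by lia. ring.
Qed.

Lemma sumZ_le_Series_pair_term (f : Z -> R) (lo : Z) (n : nat) :
  (forall i, 0 <= f i) -> f 0%Z = 0 -> ex_series (pair_term f) ->
  sumZ f lo n <= Series (pair_term f).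
Proof.
  intros Hf Hf0 Hex.
  set (N := (Z.to_nat (Z.abs lo) + n)%nat).
  apply Rle_trans with (sum_f_R0 (pair_term f) N).
  - replace (sum_f_R0 (pair_term f) N) with (sum_f_R0 (pair_term f) N + f 0%Z) by (rewrite Hf0; ring).
    rewrite sum_f_R0_pair_term. apply sumZ_subrange; [exact Hf | lia | lia].
  - apply sum_f_R0_le_Series; [intro m; unfold pair_term; pose proof (Hf (Z.of_nat (S m))); pose proof (Hf (- Z.of_nat (S m))%Z); lra | exact Hex].
Qed.

Section PSeries.
Variable p : R.
Hypothesis p_gt_1 : 1 < p.

Let f (z : Z) : R := Rpower (IZR z) (- p).
Let r : R := Rpower 2 (1 - p).

Lemma r_bounds : 0 < r < 1.
Proof.
  split; [apply exp_pos |].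
  apply Rlt_le_trans with (Rpower 2 0); [apply Rpower_lt; lra | rewrite Rpower_O; lra].
Qed.

Lemma f_antitone (m n : Z) : (1 <= m <= n)%Z -> f n <= f m.
Proof.
  intro Hmn. unfold f. rewrite !Rpower_Ropp.
  apply Rinv_le_contravar; [apply exp_pos |].
  apply Rle_Rpower_l; [lra | split; [apply IZR_lt | apply IZR_le]; lia].
Qed.

Lemma sumZ_f_le (len : nat) (lo m : Z) : (1 <= m <= lo)%Z -> sumZ f lo len <= INR len * f m.
Proof.
  revert lo; induction len as [|len IH]; intros lo Hm; [simpl; lra |].
  rewrite sumZ_cons, S_INR.
  pose proof (IH (lo + 1)%Z ltac:(lia)). pose proof (f_antitone m lo Hm). lra.
Qed.

Lemma dyadic_block (J : nat) : INR (2 ^ J) * f (Z.of_nat (2 ^ J)) = r ^ J.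
Proof.
  unfold f, r. rewrite <- INR_IZR_INZ, pow_INR.
  replace (INR 2) with 2 by (simpl; ring).
  rewrite <- (Rpower_pow J 2) by lra.
  rewrite <- (Rpower_pow J (Rpower 2 (1 - p))) by apply exp_pos.
  rewrite !Rpower_mult, <- Rpower_plus. f_equal. ring.
Qed.

(* Cauchy condensation: the terms with 2^j <= n < 2^(j+1) contribute at most r^j. *)
Lemma condensation (J : nat) : (1 - r) * sumZ f 1 (2 ^ J - 1) <= 1 - r ^ J.
Proof.
  induction J as [|J IH]; [simpl; lra |].
  assert (H2J : (1 <= 2 ^ J)%nat) by (apply Nat.pow_lower_bound; lia).
  replace (2 ^ S J - 1)%nat with ((2 ^ J - 1) + 2 ^ J)%nat by (rewrite Nat.pow_succ_r'; lia).
  rewrite sumZ_split.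
  replace (1 + Z.of_nat (2 ^ J - 1))%Z with (Z.of_nat (2 ^ J)) by lia.
  pose proof (sumZ_f_le (2 ^ J) (Z.of_nat (2 ^ J)) (Z.of_nat (2 ^ J)) ltac:(lia)) as Hblock.
  rewrite dyadic_block in Hblock.
  pose proof r_bounds. simpl pow. nra.
Qed.

Lemma ex_series_Rpower_neg : ex_series (fun n => Rpower (INR (S n)) (- p)).
Proof.
  pose proof r_bounds as Hr.
  apply (ex_series_bounded_partial _ (/ (1 - r))); [intro n; left; apply exp_pos |].
  intro N.
  assert (HN : (S N <= 2 ^ S N - 1)%nat).
  { enough (S (S N) <= 2 ^ S N)%nat by lia.
    induction N as [|N IH]; [simpl; lia | rewrite Nat.pow_succ_r'; lia]. }
  rewrite (sum_eq _ (fun n => f (Z.of_nat (S n)))) by (intros; unfold f; rewrite <- INR_IZR_INZ; reflexivity).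
  rewrite sum_f_R0_sumZ.
  apply Rle_trans with (sumZ f 1 (2 ^ S N - 1)).
  - apply sumZ_subrange; [intro; left; apply exp_pos | lia | lia].
  - apply Rmult_le_reg_l with (1 - r); [lra |].
    rewrite Rinv_r by lra. pose proof (condensation (S N)).
    pose proof (pow_le r (S N) (Rlt_le _ _ (proj1 Hr))). lra.
Qed.
End PSeries.

Lemma pair_term_nonneg (f : Z -> R) (n : nat) : (forall k, 0 <= f k) -> 0 <= pair_term f n.
Proof.
  intro Hf. unfold pair_term. pose proof (Hf (Z.of_nat (S n))). pose proof (Hf (- Z.of_nat (S n))%Z). lra.
Qed.

Lemma Hdot_term_nonneg (s : R) (v : seqZ0) (k : Z) : 0 <= Hdot_term s v k.
Proof. apply Rmult_le_pos; [left; apply exp_pos | apply pow2_ge_0]. Qed.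

Definition scaled_mod (u : seqZ0) (k : Z) : R :=
  if Z.eq_dec k 0 then 0 else Cmod (u k) / Rabs (IZR k).

Lemma scaled_mod_nonneg (u : seqZ0) (k : Z) : 0 <= scaled_mod u k.
Proof.
  unfold scaled_mod. destruct (Z.eq_dec k 0); [lra |].
  apply Rdiv_le_0_compat; [apply Cmod_ge_0 | apply Rabs_pos_lt, not_0_IZR; assumption].
Qed.

Lemma scaled_mod_sqr (u : seqZ0) (k : Z) :
  k <> 0%Z -> scaled_mod u k ^ 2 = Hdot_term (-1) u k.
Proof.
  intro Hk. unfold scaled_mod, Hdot_term. destruct (Z.eq_dec k 0); [contradiction |].
  rewrite abs_IZR.
  assert (Hpos : 0 < Rabs (IZR k)) by (apply Rabs_pos_lt, not_0_IZR; assumption).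
  replace (2 * -1) with (- INR 2) by (simpl; ring).
  rewrite Rpower_Ropp, Rpower_pow by exact Hpos. field. lra.
Qed.

Lemma Cmod_cexpi (theta : R) : Cmod (cexpi theta) = 1.
Proof.
  unfold cexpi, Cmod, fst, snd.
  rewrite Rplus_comm, <- !Rsqr_pow2, sin2_cos2. apply sqrt_1.
Qed.

Lemma Cmod_B2_term (t : R) (u v : seqZ0) (k k1 : Z) :
  Cmod (B2_term t u v k k1) = scaled_mod u k1 * scaled_mod v (k - k1).
Proof.
  unfold B2_term, scaled_mod; cbv zeta.
  destruct (Z.eq_dec k1 0); [rewrite Cmod_R, Rabs_R0; ring |].
  destruct (Z.eq_dec (k - k1) 0); [rewrite Cmod_R, Rabs_R0; ring |].
  rewrite !Cmod_mult, Cmod_R, Cmod_cexpi, Rabs_inv, Rabs_mult.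
  assert (IZR k1 <> 0) by (apply not_0_IZR; assumption).
  assert (IZR (k - k1) <> 0) by (apply not_0_IZR; assumption).
  field. split; apply Rabs_no_R0; assumption.
Qed.

Lemma sumZ_scaled_mod_sqr_le (w : seqZ0) (lo : Z) (n : nat) : in_Hdot (-1) w ->
  sumZ (fun k => scaled_mod w k ^ 2) lo n <= Series (pair_term (Hdot_term (-1) w)).
Proof.
  intro Hw.
  assert (Hpair : forall m, pair_term (fun k => scaled_mod w k ^ 2) m = pair_term (Hdot_term (-1) w) m)
    by (intro m; unfold pair_term; rewrite !scaled_mod_sqr by lia; reflexivity).
  rewrite <- (Series_ext _ _ Hpair).
  apply sumZ_le_Series_pair_term.
  - intro; apply pow2_ge_0.
  - unfold scaled_mod. simpl. ring.
  - exact (ex_series_ext _ _ (fun m => eq_sym (Hpair m)) Hw).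
Qed.

Section Convolution.
Variables u v : seqZ0.
Hypothesis u_Hm1 : in_Hdot (-1) u.
Hypothesis v_Hm1 : in_Hdot (-1) v.

Let A := Series (pair_term (Hdot_term (-1) u)).
Let B := Series (pair_term (Hdot_term (-1) v)).
Let conv (k k1 : Z) : R := scaled_mod u k1 * scaled_mod v (k - k1).

(* Termwise AM-GM [2 a b <= l a^2 + b^2 / l], then the shifted window of [v] is reindexed. *)
Lemma sum_conv_le (k : Z) (l : R) (N : nat) : 0 < l ->
  sum_f_R0 (pair_term (conv k)) N <= (l * A + B / l) / 2.
Proof.
  intro Hl.
  assert (Hconv0 : conv k 0%Z = 0) by (unfold conv, scaled_mod; simpl; ring).
  replace (sum_f_R0 (pair_term (conv k)) N) with (sum_f_R0 (pair_term (conv k)) N + conv k 0%Z)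
    by (rewrite Hconv0; ring).
  rewrite sum_f_R0_pair_term.
  eapply Rle_trans.
  - apply (sumZ_le _ (fun i => (l / 2) * scaled_mod u i ^ 2 + / (2 * l) * scaled_mod v (k - i)%Z ^ 2)).
    intro i. unfold conv.
    pose proof (scaled_mod_nonneg u i). pose proof (scaled_mod_nonneg v (k - i)).
    set (a := scaled_mod u i). set (b := scaled_mod v (k - i)).
    assert (0 <= / l * (l * a - b) ^ 2) by (apply Rmult_le_pos; [left; apply Rinv_0_lt_compat | apply pow2_ge_0]; lra).
    replace (l / 2 * a ^ 2 + / (2 * l) * b ^ 2) with (a * b + / 2 * (/ l * (l * a - b) ^ 2)) by (field; lra).
    lra.
  - rewrite sumZ_linear, (sumZ_reflect (fun j => scaled_mod v j ^ 2)).
    pose proof (sumZ_scaled_mod_sqr_le u (- (Z.of_nat N + 1)) (2 * N + 3) u_Hm1).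
    pose proof (sumZ_scaled_mod_sqr_le v (k - - (Z.of_nat N + 1) - Z.of_nat (2 * N + 3) + 1) (2 * N + 3) v_Hm1).
    assert (0 < / (2 * l)) by (apply Rinv_0_lt_compat; lra).
    replace ((l * A + B / l) / 2) with (l / 2 * A + / (2 * l) * B) by (field; lra).
    apply Rplus_le_compat; apply Rmult_le_compat_l; unfold A, B; lra.
Qed.

Lemma ex_series_conv (k : Z) : ex_series (pair_term (conv k)).
Proof.
  apply (ex_series_bounded_partial _ ((1 * A + B / 1) / 2)).
  - intro; apply pair_term_nonneg; intro; apply Rmult_le_pos; apply scaled_mod_nonneg.
  - intro N; apply sum_conv_le; lra.
Qed.

Lemma Series_conv_le (k : Z) :
  Series (pair_term (conv k)) <= Hdot_norm (-1) u * Hdot_norm (-1) v.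
Proof.
  apply le_sqrt_mult_of_AMGM.
  - apply Series_nonneg; [intro; apply pair_term_nonneg, Hdot_term_nonneg | exact u_Hm1].
  - apply Series_nonneg; [intro; apply pair_term_nonneg, Hdot_term_nonneg | exact v_Hm1].
  - intros l Hl. change (2 * Series (pair_term (conv k)) <= l * A + B / l).
    enough (Series (pair_term (conv k)) <= (l * A + B / l) / 2) by lra.
    apply (ex_series_bounded_partial _ _).
    + intro; apply pair_term_nonneg; intro; apply Rmult_le_pos; apply scaled_mod_nonneg.
    + intro N; apply sum_conv_le, Hl.
Qed.

Lemma Cmod_B2_le (t : R) (k : Z) :
  Cmod (B2 t u v k) <= Hdot_norm (-1) u * Hdot_norm (-1) v.
Proof.
  eapply Rle_trans; [| apply (Series_conv_le k)].
  unfold B2. eapply Rle_trans; [apply Cmod_triangle |].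
  rewrite Cmod_B2_term, Rplus_comm.
  replace (scaled_mod u 0) with 0 by reflexivity. rewrite Rmult_0_l, Rplus_0_r.
  apply Cmod_CSeries_le; [| apply ex_series_conv].
  intro n. eapply Rle_trans; [apply Cmod_triangle |].
  unfold pair_term, conv. rewrite !Cmod_B2_term. lra.
Qed.

Lemma B2_abs_summable_Hm1 (t : R) (k : Z) : B2_abs_summable t u v k.
Proof.
  apply (ex_series_ext (pair_term (conv k))); [| apply ex_series_conv].
  intro n. unfold pair_term, conv. rewrite !Cmod_B2_term. reflexivity.
Qed.
End Convolution.

Lemma ex_series_pair_Rpower_neg (S : R) : 1 / 2 < S ->
  ex_series (pair_term (fun k => Rpower (IZR (Z.abs k)) (- (2 * S)))).
Proof.
  intro HS.
  apply (ex_series_ext (fun n => 2 * Rpower (INR (Datatypes.S n)) (- (2 * S)))).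
  - intro n. unfold pair_term. rewrite Z.abs_opp, Z.abs_eq, <- INR_IZR_INZ by lia. lra.
  - apply ex_series_Rmult_l, ex_series_Rpower_neg. lra.
Qed.

Lemma Hdot_term_B2_le (t S : R) (u v : seqZ0) (k : Z) :
  in_Hdot (-1) u -> in_Hdot (-1) v ->
  Hdot_term (- S) (B2 t u v) k <=
  (Hdot_norm (-1) u * Hdot_norm (-1) v) ^ 2 * Rpower (IZR (Z.abs k)) (- (2 * S)).
Proof.
  intros Hu Hv. unfold Hdot_term. replace (2 * - S) with (- (2 * S)) by ring.
  rewrite Rmult_comm. apply Rmult_le_compat_r; [left; apply exp_pos |].
  apply pow_incr. split; [apply Cmod_ge_0 | apply Cmod_B2_le; assumption].
Qed.

Theorem lemma7p5 (u v : seqZ0) (S t : R) :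
  in_Hdot (-1) u -> in_Hdot (-1) v -> 1/2 < S ->
  (forall k : Z, k <> 0%Z -> B2_abs_summable t u v k) /\
  in_Hdot (- S) (B2 t u v) /\
  Hdot_norm (- S) (B2 t u v) <= cS S * Hdot_norm (-1) u * Hdot_norm (-1) v.
Proof.
  intros Hu Hv HS.
  set (C := (Hdot_norm (-1) u * Hdot_norm (-1) v) ^ 2).
  set (zeta := pair_term (fun k => Rpower (IZR (Z.abs k)) (- (2 * S)))).
  assert (Hzeta : ex_series zeta) by (apply ex_series_pair_Rpower_neg, HS).
  assert (Hbound : forall n, 0 <= pair_term (Hdot_term (- S) (B2 t u v)) n <= C * zeta n).
  { intro n. split; [apply pair_term_nonneg, Hdot_term_nonneg |].
    unfold zeta, pair_term. rewrite Rmult_plus_distr_l.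
    apply Rplus_le_compat; apply Hdot_term_B2_le; assumption. }
  assert (HB2 : in_Hdot (- S) (B2 t u v))
    by exact (ex_series_nonneg_le _ _ Hbound (ex_series_Rmult_l C _ Hzeta)).
  split; [intros k _; apply B2_abs_summable_Hm1; assumption |].
  split; [exact HB2 |].
  unfold Hdot_norm at 1, cS. fold zeta.
  apply Rle_trans with (sqrt (Series zeta * C)).
  - apply sqrt_le_1_alt. rewrite Rmult_comm, <- Series_scal_l.
    apply Series_le; [exact Hbound | apply ex_series_Rmult_l, Hzeta].
  - unfold C. rewrite sqrt_mult_alt, sqrt_pow2, Rmult_assoc; [apply Rle_refl | |].
    + apply Rmult_le_pos; apply sqrt_pos.
    + apply Series_nonneg; [intro; apply pair_term_nonneg; intro; left; apply exp_pos | exact Hzeta].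
Qed.
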